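(* Let $a,b,c>0$ with $a,b\in(0,1)$, $a<c$ and $b<c$. Let $F(x)=F(a,b;c;x)$ and $F_1(x)=F(1-x)$ for $x\in(0,1)$. Then the function $f(x)=x(1-x)F(x)F_1(x)$ is increasing on $(0,1/2]$ and decreasing on $[1/2,1)$.
   Context: $F(a,b;c;x)=\sum_{n=0}^\infty\frac{(a,n)(b,n)}{(c,n)\,n!}x^n$ for $|x|<1$ is the Gaussian hypergeometric function, where $(a,0)=1$ and $(a,n)=a(a+1)\cdots(a+n-1)$ for $n\ge1$. *)

From Stdlib Require Import Reals Arith Factorial.
From Coquelicot Require Import Coquelicot.
Open Scope R_scope.

Fixpoint poch (a : R) (n : nat) : R :=
  match n with
  | O => 1
  | S k => poch a k * (a + INR k)
  end.

(* Gaussian hypergeometric function F(a,b;c;x) = sum_n (a,n)(b,n)/((c,n) n!) x^n,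
   used for |x| < 1 (where the series converges when c > 0). *)
Definition hyp2F1 (a b c x : R) : R :=
  Series (fun n => poch a n * poch b n / (poch c n * INR (fact n)) * x ^ n).

From Stdlib Require Import Reals Factorial Lra Lia.
From Coquelicot Require Import Coquelicot.
Open Scope R_scope.

(* Write F for F(a,b;c;.) with coefficients A_n and s = 1 - t.  The function
   G(x) := (1 - x) F'(x) - F(x) has coefficients rho_n A_n, where by the
   contiguity of the A_n
     rho_n = (a+n)(b+n)/(c+n) - (n+1) = (a+b-c-1) + (c-a)(c-b)/(c+n),
   which is negative and strictly decreasing.  Differentiating gives
   f'(t) = t G(t) F(s) - s F(t) G(s).  For 0 < t < s, the Cauchy product
     G(t) F(s) - G(s) F(t) = sum_(i<j) A_i A_j (rho_i - rho_j) (t^i s^j - t^j s^i)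
   is positive, and so is (s - t) F(t) (-G(s)); hence f' > 0 on (0, 1/2).
   The symmetry f(1 - t) = f(t) gives the other half. *)

Lemma poch_pos (a : R) (n : nat) : 0 < a -> 0 < poch a n.
Proof.
  intros Ha; induction n as [|n IH]; simpl; [lra|].
  pose proof (pos_INR n); apply Rmult_lt_0_compat; lra.
Qed.

Definition hyp2F1_coef (a b c : R) (n : nat) : R :=
  poch a n * poch b n / (poch c n * INR (fact n)).

Lemma hyp2F1_coef_0 (a b c : R) : hyp2F1_coef a b c 0 = 1.
Proof. unfold hyp2F1_coef; simpl; field. Qed.

Lemma hyp2F1_coef_S (a b c : R) (n : nat) : 0 < c ->
  hyp2F1_coef a b c (S n)
  = hyp2F1_coef a b c n * ((a + INR n) * (b + INR n) / ((c + INR n) * (INR n + 1))).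
Proof.
  intros Hc; unfold hyp2F1_coef; simpl poch.
  change (fact (S n)) with (S n * fact n)%nat.
  rewrite mult_INR, S_INR.
  pose proof (poch_pos c n Hc); pose proof (INR_fact_lt_0 n); pose proof (pos_INR n).
  field; repeat split; lra.
Qed.

Lemma hyp2F1_coef_pos (a b c : R) (n : nat) :
  0 < a -> 0 < b -> 0 < c -> 0 < hyp2F1_coef a b c n.
Proof.
  intros Ha Hb Hc; unfold hyp2F1_coef.
  pose proof (poch_pos a n Ha); pose proof (poch_pos b n Hb).
  pose proof (poch_pos c n Hc); pose proof (INR_fact_lt_0 n).
  apply Rdiv_lt_0_compat; apply Rmult_lt_0_compat; assumption.
Qed.

Lemma hyp2F1_coef_le_1 (a b c : R) (n : nat) :
  0 < a <= 1 -> 0 < b <= c -> hyp2F1_coef a b c n <= 1.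
Proof.
  intros Ha Hb; induction n as [|n IH]; [rewrite hyp2F1_coef_0; lra|].
  rewrite hyp2F1_coef_S by lra.
  pose proof (pos_INR n).
  pose proof (hyp2F1_coef_pos a b c n ltac:(lra) ltac:(lra) ltac:(lra)).
  assert (Hq : 0 <= (a + INR n) * (b + INR n) / ((c + INR n) * (INR n + 1)) <= 1).
  { split.
    - apply Rlt_le, Rdiv_lt_0_compat; apply Rmult_lt_0_compat; lra.
    - rewrite <- Rdiv_le_1 by (apply Rmult_lt_0_compat; lra).
      rewrite (Rmult_comm (c + INR n)); apply Rmult_le_compat; lra. }
  nra.
Qed.

Lemma CV_radius_hyp2F1_coef (a b c : R) :
  0 < a <= 1 -> 0 < b <= c -> Rbar_le 1 (CV_radius (hyp2F1_coef a b c)).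
Proof.
  intros Ha Hb; apply (proj1 (CV_radius_bounded _)).
  exists 1; intros n.
  rewrite pow1, Rmult_1_r, Rabs_pos_eq.
  - exact (hyp2F1_coef_le_1 a b c n Ha Hb).
  - apply Rlt_le, hyp2F1_coef_pos; lra.
Qed.

Lemma is_lim_seq_PSeries_partial (a : nat -> R) (x : R) : ex_pseries a x ->
  is_lim_seq (sum_f_R0 (fun i => a i * x ^ i)) (PSeries a x).
Proof.
  intros Hex; apply is_lim_seq_ext with (sum_n (fun k => scal (pow_n x k) (a k))).
  - intros N; rewrite sum_n_Reals; apply sum_eq; intros i _.
    rewrite pow_n_pow; apply Rmult_comm.
  - exact (PSeries_correct a x Hex).
Qed.

Lemma PSeries_ge_coef0 (a : nat -> R) (x : R) :
  (forall n, 0 <= a n) -> 0 <= x -> ex_pseries a x -> a 0%nat <= PSeries a x.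
Proof.
  intros Ha Hx Hex.
  replace (a 0%nat) with (sum_f_R0 (fun i => a i * x ^ i) 0) by (simpl; ring).
  apply (is_lim_seq_incr_compare _ _ (is_lim_seq_PSeries_partial a x Hex)).
  intros n; simpl; pose proof (pow_le x (S n) Hx); pose proof (Ha (S n)).
  assert (0 <= a (S n) * x ^ S n) by (apply Rmult_le_pos; assumption).
  simpl in *; lra.
Qed.

Lemma is_pseries_one_minus_x_derive (a : nat -> R) (x : R) :
  Rbar_lt (Rabs x) (CV_radius a) ->
  is_pseries (fun n => INR (S n) * (a (S n) - a n)) x
    ((1 - x) * PSeries (PS_derive a) x - PSeries a x).
Proof.
  intros Hx.
  assert (Hd := PSeries_correct _ _ (ex_pseries_derive a x Hx)).
  assert (Ha := PSeries_correct _ _ (CV_radius_inside a x Hx)).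
  assert (H := is_pseries_minus _ _ _ _ _
                 (is_pseries_minus _ _ _ _ _ Hd (is_pseries_incr_1 _ _ _ Hd)) Ha).
  replace ((1 - x) * PSeries (PS_derive a) x - PSeries a x)
    with (plus (plus (PSeries (PS_derive a) x) (opp (scal x (PSeries (PS_derive a) x))))
            (opp (PSeries a x)))
    by (unfold plus, opp, scal; simpl; unfold mult; simpl; ring).
  refine (is_pseries_ext _ _ _ _ _ H); intros [|n];
    unfold PS_minus, PS_incr_1, PS_derive, plus, opp, zero; simpl; ring.
Qed.

Lemma pow_cross_lt (x y : R) (i j : nat) :
  0 < x < y -> (i < j)%nat -> x ^ j * y ^ i < x ^ i * y ^ j.
Proof.
  intros Hxy Hij; replace j with (i + S (j - S i))%nat by lia.
  rewrite !pow_add; set (k := (j - S i)%nat); simpl pow.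
  assert (Hxk : x ^ k <= y ^ k) by (apply pow_incr; lra).
  pose proof (pow_lt x i ltac:(lra)); pose proof (pow_lt y i ltac:(lra)).
  pose proof (pow_lt x k ltac:(lra)).
  assert (x * x ^ k < y * y ^ k) by nra.
  assert (0 < x ^ i * y ^ i) by (apply Rmult_lt_0_compat; assumption).
  nra.
Qed.

Section PartialCross.
Variables (A rho : nat -> R) (x y : R).
Hypothesis A_pos : forall n, 0 < A n.
Hypothesis rho_decr : forall n m, (n < m)%nat -> rho m < rho n.
Hypothesis x_pos : 0 < x.
Hypothesis x_lt_y : x < y.

Let partial (a : nat -> R) (z : R) := sum_f_R0 (fun i => a i * z ^ i).
Let B (n : nat) := rho n * A n.

Let partial_cross (N : nat) :=
  partial B x N * partial A y N - partial B y N * partial A x N.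

Let partial_cross_term (i j : nat) :=
  A i * A j * (rho i - rho j) * (x ^ i * y ^ j - x ^ j * y ^ i).

Lemma partial_cross_term_pos (i j : nat) : (i < j)%nat -> 0 < partial_cross_term i j.
Proof.
  intros Hij; unfold partial_cross_term.
  pose proof (A_pos i); pose proof (A_pos j); pose proof (rho_decr i j Hij).
  pose proof (pow_cross_lt x y i j ltac:(lra) Hij).
  repeat apply Rmult_lt_0_compat; lra.
Qed.

Lemma sum_partial_cross_term (M N : nat) :
  sum_f_R0 (fun i => partial_cross_term i M) N
  = partial B x N * (A M * y ^ M) + B M * x ^ M * partial A y N
    - partial B y N * (A M * x ^ M) - B M * y ^ M * partial A x N.
Proof.
  unfold partial_cross_term, partial, B.
  induction N as [|N IH]; simpl sum_f_R0; [|rewrite IH]; ring.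
Qed.

Lemma partial_cross_S (N : nat) :
  partial_cross (S N) = partial_cross N + sum_f_R0 (fun i => partial_cross_term i (S N)) N.
Proof. rewrite sum_partial_cross_term; unfold partial_cross, partial, B; simpl; ring. Qed.

Lemma sum_partial_cross_term_pos (M N : nat) :
  (N < M)%nat -> 0 < sum_f_R0 (fun i => partial_cross_term i M) N.
Proof.
  intros HNM; induction N as [|N IH]; simpl.
  - exact (partial_cross_term_pos 0 M HNM).
  - pose proof (IH ltac:(lia)); pose proof (partial_cross_term_pos (S N) M HNM); lra.
Qed.

Lemma partial_cross_0 : partial_cross 0 = 0.
Proof. unfold partial_cross, partial; simpl; ring. Qed.

Lemma partial_cross_incr (N : nat) : partial_cross N < partial_cross (S N).
Proof.
  rewrite partial_cross_S.
  pose proof (sum_partial_cross_term_pos (S N) N (Nat.lt_succ_diag_r N)); lra.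
Qed.

Lemma PSeries_cross_pos :
  ex_pseries A x -> ex_pseries A y -> ex_pseries B x -> ex_pseries B y ->
  0 < PSeries B x * PSeries A y - PSeries B y * PSeries A x.
Proof.
  intros HAx HAy HBx HBy.
  assert (Hlim : is_lim_seq partial_cross
                   (PSeries B x * PSeries A y - PSeries B y * PSeries A x)).
  { apply is_lim_seq_minus'; apply is_lim_seq_mult';
      apply is_lim_seq_PSeries_partial; assumption. }
  pose proof (is_lim_seq_incr_compare _ _ Hlim (fun N => Rlt_le _ _ (partial_cross_incr N)) 1).
  pose proof (partial_cross_incr 0); rewrite partial_cross_0 in *; lra.
Qed.
End PartialCross.

Definition hyp2F1_rho (a b c : R) (n : nat) : R :=
  (a + INR n) * (b + INR n) / (c + INR n) - (INR n + 1).

Lemma hyp2F1_coef_contiguous (a b c : R) (n : nat) : 0 < c ->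
  INR (S n) * (hyp2F1_coef a b c (S n) - hyp2F1_coef a b c n)
  = hyp2F1_rho a b c n * hyp2F1_coef a b c n.
Proof.
  intros Hc; rewrite hyp2F1_coef_S by exact Hc; unfold hyp2F1_rho.
  rewrite S_INR; pose proof (pos_INR n); field; lra.
Qed.

Lemma hyp2F1_rho_decr (a b c : R) (n m : nat) : 0 < c -> a < c -> b < c ->
  (n < m)%nat -> hyp2F1_rho a b c m < hyp2F1_rho a b c n.
Proof.
  intros Hc Hac Hbc Hnm; apply lt_INR in Hnm; pose proof (pos_INR n).
  assert (E : forall k, 0 <= k -> (a + k) * (b + k) / (c + k) - (k + 1)
                              = (a + b - c - 1) + (c - a) * (c - b) / (c + k)).
  { intros k Hk; field; lra. }
  unfold hyp2F1_rho; rewrite !E by lra.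
  apply Rplus_lt_compat_l, Rmult_lt_compat_l; [nra|].
  apply Rinv_lt_contravar; nra.
Qed.

Lemma hyp2F1_rho_neg (a b c : R) (n : nat) : 0 < a < 1 -> 0 < b < c ->
  hyp2F1_rho a b c n < 0.
Proof.
  intros Ha Hb; unfold hyp2F1_rho; pose proof (pos_INR n).
  apply Rlt_minus, Rlt_div_l; [lra|].
  assert (a + INR n < INR n + 1) by lra; assert (b + INR n < c + INR n) by lra.
  nra.
Qed.

Section Hypergeometric.
Variables a b c : R.
Hypotheses (Ha : 0 < a < 1) (Hb : 0 < b) (Hac : a < c) (Hbc : b < c).

Let A := hyp2F1_coef a b c.
Let F := hyp2F1 a b c.
Let F' := PSeries (PS_derive A).
Let G := PSeries (fun n => hyp2F1_rho a b c n * A n).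
Let f (t : R) := t * (1 - t) * F t * F (1 - t).
Let df (t : R) := t * G t * F (1 - t) - (1 - t) * F t * G (1 - t).

Lemma Rabs_lt_CV_radius_hyp2F1 (x : R) : Rabs x < 1 -> Rbar_lt (Rabs x) (CV_radius A).
Proof.
  intros Hx; apply (Rbar_lt_le_trans _ 1); [exact Hx|].
  apply CV_radius_hyp2F1_coef; lra.
Qed.

Lemma is_pseries_hyp2F1_rho (x : R) : Rabs x < 1 ->
  is_pseries (fun n => hyp2F1_rho a b c n * A n) x ((1 - x) * F' x - F x).
Proof.
  intros Hx.
  refine (is_pseries_ext _ _ _ _ _
            (is_pseries_one_minus_x_derive A x (Rabs_lt_CV_radius_hyp2F1 x Hx))).
  intros n; apply hyp2F1_coef_contiguous; lra.
Qed.

Lemma hyp2F1_pos (x : R) : 0 <= x < 1 -> 0 < F x.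
Proof.
  intros Hx; assert (Hr : Rabs x < 1) by (rewrite Rabs_pos_eq; lra).
  apply (Rlt_le_trans _ (A 0%nat)); [unfold A; rewrite hyp2F1_coef_0; lra|].
  apply PSeries_ge_coef0; [intros n; apply Rlt_le, hyp2F1_coef_pos; lra | lra|].
  exact (CV_radius_inside A x (Rabs_lt_CV_radius_hyp2F1 x Hr)).
Qed.

Lemma PSeries_hyp2F1_rho_neg (x : R) : 0 <= x < 1 -> G x < 0.
Proof.
  intros Hx; assert (Hr : Rabs x < 1) by (rewrite Rabs_pos_eq; lra).
  set (B := fun n => hyp2F1_rho a b c n * A n).
  assert (HB : forall n, B n < 0).
  { intros n; pose proof (hyp2F1_rho_neg a b c n Ha ltac:(lra)).
    pose proof (hyp2F1_coef_pos a b c n ltac:(lra) ltac:(lra) ltac:(lra)).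
    unfold B, A; nra. }
  assert (H : PS_opp B 0%nat <= PSeries (PS_opp B) x).
  { apply PSeries_ge_coef0; [|lra|].
    - intros n; pose proof (HB n); unfold PS_opp, opp; simpl; lra.
    - exact (ex_pseries_opp _ x (ex_intro _ _ (is_pseries_hyp2F1_rho x Hr))). }
  rewrite PSeries_opp in H; unfold PS_opp, opp in H; simpl in H.
  pose proof (HB 0%nat); unfold G; fold B; lra.
Qed.

Lemma is_derive_hyp2F1_sym_prod (t : R) : 0 < t < 1 -> is_derive f t (df t).
Proof.
  intros Ht.
  assert (Hr : Rabs t < 1) by (rewrite Rabs_pos_eq; lra).
  assert (Hs : Rabs (1 - t) < 1) by (rewrite Rabs_pos_eq; lra).
  assert (Gt := is_pseries_unique _ _ _ (is_pseries_hyp2F1_rho t Hr)).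
  assert (Gs := is_pseries_unique _ _ _ (is_pseries_hyp2F1_rho (1 - t) Hs)).
  fold G in Gt, Gs; replace (1 - (1 - t)) with t in Gs by ring.
  assert (dF : forall x, Rabs x < 1 -> is_derive F x (F' x)).
  { intros x Hx; exact (is_derive_PSeries A x (Rabs_lt_CV_radius_hyp2F1 x Hx)). }
  unfold f, df; auto_derive; change (fun x => F x) with F;
    replace (1 + - t) with (1 - t) by ring.
  - split; [|split; [|exact I]]; eexists; apply dF; assumption.
  - rewrite (is_derive_unique _ _ _ (dF t Hr)), (is_derive_unique _ _ _ (dF _ Hs)).
    rewrite Gt, Gs; ring.
Qed.

Lemma hyp2F1_sym_prod_derive_pos (t : R) : 0 < t < 1/2 -> 0 < df t.
Proof.
  intros Ht.
  assert (Hr : Rabs t < 1) by (rewrite Rabs_pos_eq; lra).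
  assert (Hs : Rabs (1 - t) < 1) by (rewrite Rabs_pos_eq; lra).
  assert (Hcross : 0 < G t * F (1 - t) - G (1 - t) * F t).
  { apply (PSeries_cross_pos A (hyp2F1_rho a b c) t (1 - t)).
    - intros n; apply hyp2F1_coef_pos; lra.
    - intros n m; apply hyp2F1_rho_decr; lra.
    - lra.
    - lra.
    - exact (CV_radius_inside A t (Rabs_lt_CV_radius_hyp2F1 t Hr)).
    - exact (CV_radius_inside A _ (Rabs_lt_CV_radius_hyp2F1 _ Hs)).
    - exact (ex_intro _ _ (is_pseries_hyp2F1_rho t Hr)).
    - exact (ex_intro _ _ (is_pseries_hyp2F1_rho _ Hs)). }
  pose proof (hyp2F1_pos t ltac:(lra)).
  pose proof (PSeries_hyp2F1_rho_neg (1 - t) ltac:(lra)).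
  assert (E : df t = t * (G t * F (1 - t) - G (1 - t) * F t)
                     + (1 - 2 * t) * F t * - G (1 - t))
    by (unfold df; ring).
  rewrite E; apply Rplus_lt_0_compat; repeat apply Rmult_lt_0_compat; lra.
Qed.

Lemma hyp2F1_sym_prod_incr (x y : R) : 0 < x -> x < y -> y <= 1/2 -> f x < f y.
Proof.
  intros Hx Hxy Hy.
  destruct (MVT_cor2 f df x y Hxy) as [z [Ez Hz]].
  - intros z Hz; apply is_derive_Reals, is_derive_hyp2F1_sym_prod; lra.
  - pose proof (hyp2F1_sym_prod_derive_pos z ltac:(lra)).
    assert (0 < df z * (y - x)) by (apply Rmult_lt_0_compat; lra).
    lra.
Qed.
End Hypergeometric.

Theorem theorem3p3 (a b c : R) :
  0 < a < 1 -> 0 < b < 1 -> 0 < c -> a < c -> b < c ->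
  let f := fun x => x * (1 - x) * hyp2F1 a b c x * hyp2F1 a b c (1 - x) in
  (forall x y, 0 < x -> x < y -> y <= 1/2 -> f x < f y) /\
  (forall x y, 1/2 <= x -> x < y -> y < 1 -> f y < f x).
Proof.
  intros Ha Hb Hc Hac Hbc f.
  assert (Hincr := hyp2F1_sym_prod_incr a b c Ha (proj1 Hb) Hac Hbc).
  assert (Hsym : forall t, f (1 - t) = f t)
    by (intros t; unfold f; replace (1 - (1 - t)) with t by ring; ring).
  split; [exact Hincr|].
  intros x y Hx Hxy Hy; rewrite <- (Hsym x), <- (Hsym y); apply Hincr; lra.
Qed.
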